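(* Let $X$ be a locale with $\mathcal{O}X=\langle G\ \wedge\text{-semilattice}\mid R\rangle_{\mathbf{Frm}}$, where $G$ is a $\wedge$-semilattice and $R$ is a set of relations $\bigvee S\le\bigvee T$ ($S,T\subseteq G$) closed under meeting with elements of $G$, in the sense that with $\bigvee S\le\bigvee T$ also $\bigvee_{s\in S}u\wedge s\le\bigvee_{t\in T}u\wedge t$ is in $R$ for every $u\in G$. Then $X$ is overt if and only if there is a subset $P\subseteq G$ such that: 1. $P$ is upward closed in $G$; 2. for each relation $\bigvee S\le\bigvee T$ in $R$, if $S\cap P$ is inhabited then $T\cap P$ is inhabited; 3. for each $g\in G$, $g\le\bigvee\{1\mid g\in P\}$ holds in $\mathcal{O}X$, where $g$ denotes its image in $\mathcal{O}X$.
   Context: Work constructively: neither excluded middle nor any form of choice is assumed. Presentations: $\langle G\ \wedge\text{-semilattice}\mid R\rangle_{\mathbf{Frm}}$ is the frame universal among frames equipped with a finite-meet-preserving map from $G$ satisfying the relations in $R$. Overtness: $\Omega$ is the frame of truth values. A locale $X$ is overt if ${!}^*\colon\Omega\to\mathcal{O}X$, $p\mapsto\bigvee\{1\mid p=\top\}$, has a left adjoint. *)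

(* Posets are presented as preorders; "equality" in a frame is the
   induced equivalence a <= b /\ b <= a (setoid style), so no quotients
   or extensionality axioms are needed. *)

Record MeetSemilattice := {
  scar :> Type;
  sle : scar -> scar -> Prop;
  sle_refl : forall a, sle a a;
  sle_trans : forall a b c, sle a b -> sle b c -> sle a c;
  stop : scar;
  smeet : scar -> scar -> scar;
  stop_max : forall a, sle a stop;
  smeet_glb : forall a b c, sle c (smeet a b) <-> (sle c a /\ sle c b)
}.

Record Frame := {
  fcar :> Type;
  fle : fcar -> fcar -> Prop;
  fle_refl : forall a, fle a a;
  fle_trans : forall a b c, fle a b -> fle b c -> fle a c;
  ftop : fcar;
  fmeet : fcar -> fcar -> fcar;
  fjoin : (fcar -> Prop) -> fcar;
  ftop_max : forall a, fle a ftop;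
  fmeet_glb : forall a b c, fle c (fmeet a b) <-> (fle c a /\ fle c b);
  fjoin_lub : forall (S : fcar -> Prop) c,
      fle (fjoin S) c <-> (forall s, S s -> fle s c);
  fdistr : forall a (S : fcar -> Prop),
      fle (fmeet a (fjoin S)) (fjoin (fun x => exists s, S s /\ x = fmeet a s))
}.

Arguments sle {_} _ _.
Arguments stop {_}.
Arguments smeet {_} _ _.
Arguments fle {_} _ _.
Arguments ftop {_}.
Arguments fmeet {_} _ _.
Arguments fjoin {_} _.

Definition feq {L : Frame} (a b : L) : Prop := fle a b /\ fle b a.

Definition img {A B : Type} (f : A -> B) (S : A -> Prop) : B -> Prop :=
  fun y => exists x, S x /\ y = f x.

Definition meet_pres {G : MeetSemilattice} {L : Frame} (f : G -> L) : Prop :=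
  (forall a b, sle a b -> fle (f a) (f b)) /\
  feq (f stop) ftop /\
  (forall a b, feq (f (smeet a b)) (fmeet (f a) (f b))).

Definition frame_hom {L M : Frame} (h : L -> M) : Prop :=
  (forall a b, fle a b -> fle (h a) (h b)) /\
  feq (h ftop) ftop /\
  (forall a b, feq (h (fmeet a b)) (fmeet (h a) (h b))) /\
  (forall S : L -> Prop, feq (h (fjoin S)) (fjoin (img h S))).

(** A set of relations  \/ S <= \/ T  with S, T subsets of G. *)
Definition Relations (G : MeetSemilattice) : Type := (G -> Prop) -> (G -> Prop) -> Prop.

Definition satisfies {G : MeetSemilattice} {M : Frame} (R : Relations G) (f : G -> M) : Prop :=
  forall S T, R S T -> fle (fjoin (img f S)) (fjoin (img f T)).

Definition meet_closed {G : MeetSemilattice} (R : Relations G) : Prop :=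
  forall S T, R S T -> forall u : G,
    exists S' T', R S' T' /\
      (forall x, S' x <-> img (smeet u) S x) /\
      (forall x, T' x <-> img (smeet u) T x).

(** L (with generator map eta) is the frame presented by
    < G meet-semilattice | R >_Frm : universal among frames with a
    finite-meet-preserving map from G satisfying R. *)
Definition is_presentation (G : MeetSemilattice) (R : Relations G)
    (L : Frame) (eta : G -> L) : Prop :=
  meet_pres eta /\ satisfies R eta /\
  forall (M : Frame) (f : G -> M), meet_pres f -> satisfies R f ->
    (exists h : L -> M, frame_hom h /\ forall g, feq (h (eta g)) (f g)) /\
    (forall h1 h2 : L -> M, frame_hom h1 -> frame_hom h2 ->
       (forall g, feq (h1 (eta g)) (f g)) ->
       (forall g, feq (h2 (eta g)) (f g)) ->
       forall a, feq (h1 a) (h2 a)).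

(** !^* : Omega -> OX,  p |-> \/ {1 | p}. Omega = Prop (ordered by ->). *)
Definition bang_star (L : Frame) (p : Prop) : L :=
  fjoin (fun x : L => p /\ x = ftop).

Definition overt (L : Frame) : Prop :=
  exists ex : L -> Prop, forall (a : L) (p : Prop), (ex a -> p) <-> fle a (bang_star L p).


(* Proof strategy.
   (=>) If ex is left adjoint to !^*, put P g := ex (eta g).  A left adjoint
   is monotone, satisfies a <= !^*(ex a), and turns joins into existentials
   (ex (\/ S) implies ex s for some s in S).  These three facts, together with
   monotonicity of eta and the relations R holding in OX, give 1-3.
   (<=) We build a concrete model of the presented frame: subsets of G,
   preordered by D <= E iff D lies in the R-closure of E (the least set
   containing E that is downward closed and contains S whenever it contains
   T, for every relation R S T).  Meet-closedness of R makes this a frame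
   (the distributive law).  Universality gives a frame map h : OX -> model,
   and D |-> \/ eta[D] is a frame map back whose composite with h is the
   identity on OX.  Then ex a := "h a contains an element of P" is the left
   adjoint: a <= \/ eta[h a] <= !^*(ex a) by condition 3, and conversely
   P-positivity propagates through R-closures by conditions 1 and 2. *)

Lemma smeet_lb_l (G : MeetSemilattice) (a b : G) : sle (smeet a b) a.
Proof. apply (proj1 (smeet_glb G a b (smeet a b)) (sle_refl G _)). Qed.

Lemma smeet_lb_r (G : MeetSemilattice) (a b : G) : sle (smeet a b) b.
Proof. apply (proj1 (smeet_glb G a b (smeet a b)) (sle_refl G _)). Qed.

Lemma smeet_comm (G : MeetSemilattice) (a b : G) : sle (smeet a b) (smeet b a).
Proof. apply (smeet_glb G); split; [apply smeet_lb_r | apply smeet_lb_l]. Qed.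

Lemma smeet_mono (G : MeetSemilattice) (a b a' b' : G) :
  sle a a' -> sle b b' -> sle (smeet a b) (smeet a' b').
Proof.
  intros Ha Hb. apply (smeet_glb G). split.
  - eapply sle_trans; [apply smeet_lb_l | exact Ha].
  - eapply sle_trans; [apply smeet_lb_r | exact Hb].
Qed.

Lemma smeet_diag (G : MeetSemilattice) (a : G) : sle a (smeet a a).
Proof. apply (smeet_glb G); split; apply sle_refl. Qed.

Lemma fmeet_lb_l (L : Frame) (a b : L) : fle (fmeet a b) a.
Proof. apply (proj1 (fmeet_glb L a b (fmeet a b)) (fle_refl L _)). Qed.

Lemma fmeet_lb_r (L : Frame) (a b : L) : fle (fmeet a b) b.
Proof. apply (proj1 (fmeet_glb L a b (fmeet a b)) (fle_refl L _)). Qed.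

Lemma fmeet_comm (L : Frame) (a b : L) : fle (fmeet a b) (fmeet b a).
Proof. apply (fmeet_glb L); split; [apply fmeet_lb_r | apply fmeet_lb_l]. Qed.

Lemma fjoin_ub (L : Frame) (S : L -> Prop) (x : L) : S x -> fle x (fjoin S).
Proof. intro Sx. exact (proj1 (fjoin_lub L S (fjoin S)) (fle_refl L _) x Sx). Qed.

Lemma fjoin_cofinal (L : Frame) (A B : L -> Prop) :
  (forall x, A x -> exists y, B y /\ fle x y) -> fle (fjoin A) (fjoin B).
Proof.
  intro H. apply (fjoin_lub L). intros x Ax.
  destruct (H x Ax) as (y & By & Hxy).
  eapply fle_trans; [exact Hxy | apply fjoin_ub; exact By].
Qed.

Lemma fmeet_fjoin_distr (L : Frame) (A B : L -> Prop) :
  fle (fmeet (fjoin A) (fjoin B))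
      (fjoin (fun x => exists a b, A a /\ B b /\ x = fmeet a b)).
Proof.
  eapply fle_trans; [apply fdistr |]. apply (fjoin_lub L).
  intros x [b [Bb ->]].
  eapply fle_trans; [apply fmeet_comm |].
  eapply fle_trans; [apply fdistr |]. apply (fjoin_lub L).
  intros y [a [Aa ->]].
  eapply fle_trans; [apply fmeet_comm |].
  apply fjoin_ub. exists a, b. auto.
Qed.

Lemma feq_trans (L : Frame) (a b c : L) : feq a b -> feq b c -> feq a c.
Proof. intros [H1 H2] [H3 H4]; split; eapply fle_trans; eauto. Qed.

Lemma bang_star_mono (L : Frame) (p q : Prop) :
  (p -> q) -> fle (bang_star L p) (bang_star L q).
Proof.
  intro Hpq. apply fjoin_cofinal. intros x [Hp Hx].
  exists x. split; [split; auto | apply fle_refl].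
Qed.

Lemma hom_feq (L M : Frame) (h : L -> M) :
  frame_hom h -> forall a b, feq a b -> feq (h a) (h b).
Proof. intros [Hmono _] a b [H1 H2]; split; apply Hmono; assumption. Qed.

Lemma hom_id (L : Frame) : frame_hom (fun a : L => a).
Proof.
  split; [| split; [| split]].
  - auto.
  - split; apply fle_refl.
  - intros; split; apply fle_refl.
  - intro S; split; apply fjoin_cofinal.
    + intros x Sx. exists x. split; [exists x; auto | apply fle_refl].
    + intros x [y [Sy ->]]. exists y. split; [exact Sy | apply fle_refl].
Qed.

Lemma hom_comp (L M N : Frame) (h : L -> M) (k : M -> N) :
  frame_hom h -> frame_hom k -> frame_hom (fun a => k (h a)).
Proof.
  intros Hh Hk.
  pose proof Hh as (h_mono & h_top & h_meet & h_join).
  pose proof Hk as (k_mono & k_top & k_meet & k_join).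
  split; [| split; [| split]].
  - intros a b Hab. apply k_mono, h_mono, Hab.
  - eapply feq_trans; [apply (hom_feq _ _ _ Hk), h_top | exact k_top].
  - intros a b. eapply feq_trans; [apply (hom_feq _ _ _ Hk), h_meet | apply k_meet].
  - intro S. eapply feq_trans; [apply (hom_feq _ _ _ Hk), h_join |].
    eapply feq_trans; [apply k_join |].
    split; apply fjoin_cofinal.
    + intros x [y [[z [Sz ->]] ->]]. exists (k (h z)).
      split; [exists z; auto | apply fle_refl].
    + intros x [z [Sz ->]]. exists (k (h z)).
      split; [exists (h z); split; [exists z; auto | reflexivity] | apply fle_refl].
Qed.

Section LeftAdjoint.
  Variable L : Frame.
  Variable ex : L -> Prop.
  Hypothesis ex_adj : forall (a : L) (p : Prop), (ex a -> p) <-> fle a (bang_star L p).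

  Lemma ex_unit (a : L) : fle a (bang_star L (ex a)).
  Proof. apply ex_adj; auto. Qed.

  Lemma ex_mono (a b : L) : fle a b -> ex a -> ex b.
  Proof. intro Hab. apply ex_adj. eapply fle_trans; [exact Hab | apply ex_unit]. Qed.

  (* A left adjoint preserves joins: a positive join has a positive member. *)
  Lemma ex_fjoin (S : L -> Prop) : ex (fjoin S) -> exists s, S s /\ ex s.
  Proof.
    apply ex_adj, (fjoin_lub L). intros s Ss.
    eapply fle_trans; [apply ex_unit |].
    apply bang_star_mono. intro Hs. exists s; auto.
  Qed.
End LeftAdjoint.

Lemma positivity_of_overt (G : MeetSemilattice) (R : Relations G)
    (L : Frame) (eta : G -> L) :
  meet_pres eta -> satisfies R eta -> overt L ->
  exists P : G -> Prop,
    (forall g h : G, sle g h -> P g -> P h) /\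
    (forall S T, R S T -> (exists s, S s /\ P s) -> (exists t, T t /\ P t)) /\
    (forall g : G, fle (eta g) (fjoin (fun x : L => P g /\ x = ftop))).
Proof.
  intros [eta_mono _] eta_sat Hovert. destruct Hovert as [ex ex_adj].
  exists (fun g => ex (eta g)). split; [| split].
  - intros g h Hgh. apply (ex_mono L ex ex_adj), eta_mono, Hgh.
  - intros S T HST [s [Ss Ps]].
    assert (Hjoin : ex (fjoin (img eta T))).
    { eapply (ex_mono L ex ex_adj); [| exact Ps].
      apply fle_trans with (fjoin (img eta S)); [| apply eta_sat, HST].
      apply fjoin_ub. exists s; split; [exact Ss | reflexivity]. }
    destruct (ex_fjoin L ex ex_adj _ Hjoin) as [x [[t [Tt ->]] Pt]].
    exists t; auto.
  - intro g. apply (ex_unit L ex ex_adj).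
Qed.

Inductive rclosure {G : MeetSemilattice} (R : Relations G) (E : G -> Prop) : G -> Prop :=
| rcl_base g : E g -> rclosure R E g
| rcl_down g h : sle g h -> rclosure R E h -> rclosure R E g
| rcl_rel S T s : R S T -> (forall t, T t -> rclosure R E t) -> S s -> rclosure R E s.

Arguments rcl_base {G R E} g _.
Arguments rcl_down {G R E} g h _ _.
Arguments rcl_rel {G R E} S T s _ _ _.

Lemma rclosure_sub (G : MeetSemilattice) (R : Relations G) (E F : G -> Prop) :
  (forall g, E g -> rclosure R F g) -> forall g, rclosure R E g -> rclosure R F g.
Proof.
  intros HEF g Hg. induction Hg as [g Eg | g h Hgh _ IH | S T s HST _ IH Ss].
  - auto.
  - exact (rcl_down g h Hgh IH).
  - exact (rcl_rel S T s HST IH Ss).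
Qed.

Lemma rclosure_meet (G : MeetSemilattice) (R : Relations G) (HR : meet_closed R)
    (A B C : G -> Prop) :
  (forall a b, A a -> B b -> rclosure R C (smeet a b)) ->
  forall h, rclosure R B h -> forall g, rclosure R A g -> rclosure R C (smeet g h).
Proof.
  intros HAB h Hh. induction Hh as [h Bh | h h' Hhh' _ IHh | S T s HST _ IHh Ss].
  - intros g Hg. induction Hg as [g Ag | g g' Hgg' _ IHg | S T s HST _ IHg Ss].
    + apply HAB; assumption.
    + exact (rcl_down _ _ (smeet_mono G _ _ _ _ Hgg' (sle_refl G h)) IHg).
    + destruct (HR S T HST h) as (S' & T' & HST' & HS' & HT').
      apply (rcl_down _ (smeet h s) (smeet_comm G _ _)).
      apply (rcl_rel S' T'); [exact HST' | | apply HS'; exists s; auto].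
      intros x Tx. apply HT' in Tx. destruct Tx as (t & Tt & ->).
      exact (rcl_down _ _ (smeet_comm G _ _) (IHg t Tt)).
  - intros g Hg.
    exact (rcl_down _ _ (smeet_mono G _ _ _ _ (sle_refl G g) Hhh') (IHh g Hg)).
  - intros g Hg. destruct (HR S T HST g) as (S' & T' & HST' & HS' & HT').
    apply (rcl_rel S' T'); [exact HST' | | apply HS'; exists s; auto].
    intros x Tx. apply HT' in Tx. destruct Tx as (t & Tt & ->). exact (IHh t Tt g Hg).
Qed.

Lemma rclosure_positive (G : MeetSemilattice) (R : Relations G) (P : G -> Prop)
    (P_up : forall g h : G, sle g h -> P g -> P h)
    (P_rel : forall S T, R S T -> (exists s, S s /\ P s) -> (exists t, T t /\ P t))
    (X : G -> Prop) :
  forall g, rclosure R X g -> P g -> exists x, X x /\ P x.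
Proof.
  intros g Hg. induction Hg as [g Xg | g h Hgh _ IH | S T s HST _ IH Ss]; intro Pg.
  - exists g; auto.
  - exact (IH (P_up g h Hgh Pg)).
  - destruct (P_rel S T HST (ex_intro _ s (conj Ss Pg))) as (t & Tt & Pt).
    exact (IH t Tt Pt).
Qed.

Section IdealFrame.
  Variable G : MeetSemilattice.
  Variable R : Relations G.
  Hypothesis HR : meet_closed R.

  Definition ideal_le (D E : G -> Prop) : Prop := forall g, D g -> rclosure R E g.
  Definition ideal_meet (D E : G -> Prop) : G -> Prop :=
    fun g => rclosure R D g /\ rclosure R E g.
  Definition ideal_join (Ds : (G -> Prop) -> Prop) : G -> Prop :=
    fun g => exists D, Ds D /\ D g.

  Lemma ideal_meet_glb (D E F : G -> Prop) :
    ideal_le F (ideal_meet D E) <-> ideal_le F D /\ ideal_le F E.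
  Proof.
    split.
    - intro H; split; intros g Fg;
        refine (rclosure_sub G R _ _ _ g (H g Fg)); intros x [HxD HxE]; assumption.
    - intros [HD HE] g Fg. apply rcl_base. split; auto.
  Qed.

  Lemma ideal_distr (D : G -> Prop) (Ds : (G -> Prop) -> Prop) :
    ideal_le (ideal_meet D (ideal_join Ds))
      (ideal_join (fun x => exists E, Ds E /\ x = ideal_meet D E)).
  Proof.
    intros g [HgD HgJ]. apply (rcl_down _ _ (smeet_diag G g)).
    refine (rclosure_meet G R HR D (ideal_join Ds) _ _ g HgJ g HgD).
    intros d e Dd [E [DsE Ee]]. apply rcl_base.
    exists (ideal_meet D E). split; [exists E; auto | split].
    - exact (rcl_down _ d (smeet_lb_l G _ _) (rcl_base d Dd)).
    - exact (rcl_down _ e (smeet_lb_r G _ _) (rcl_base e Ee)).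
  Qed.

  Definition IdealFrame : Frame.
  Proof.
    refine (@Build_Frame (G -> Prop) ideal_le _ _ (fun _ => True)
              ideal_meet ideal_join _ ideal_meet_glb _ ideal_distr).
    - intros D g Dg. exact (rcl_base g Dg).
    - intros D E F HDE HEF g Dg. exact (rclosure_sub G R E F HEF g (HDE g Dg)).
    - intros D g _. exact (rcl_base g I).
    - intros Ds F. split.
      + intros H D DsD g Dg. apply H. exists D; auto.
      + intros H g [D [DsD Dg]]. exact (H D DsD g Dg).
  Defined.

  Definition principal (g : G) : G -> Prop := fun x => x = g.

  Lemma principal_meet_pres : @meet_pres G IdealFrame principal.
  Proof.
    split; [| split].
    - intros a b Hab x ->. exact (rcl_down a b Hab (rcl_base b eq_refl)).
    - split.
      + intros x _. exact (rcl_base x I).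
      + intros x _. exact (rcl_down x stop (stop_max G x) (rcl_base stop eq_refl)).
    - intros a b. split.
      + intros x ->. apply rcl_base. split.
        * exact (rcl_down _ a (smeet_lb_l G a b) (rcl_base a eq_refl)).
        * exact (rcl_down _ b (smeet_lb_r G a b) (rcl_base b eq_refl)).
      + intros x [Ha Hb]. apply (rcl_down _ _ (smeet_diag G x)).
        refine (rclosure_meet G R HR (principal a) (principal b) _ _ x Hb x Ha).
        intros a' b' -> ->. exact (rcl_base _ eq_refl).
  Qed.

  Lemma principal_satisfies : @satisfies G IdealFrame R principal.
  Proof.
    intros S T HST g [D [[s [Ss ->]] ->]].
    apply (rcl_rel S T); [exact HST | | exact Ss].
    intros t Tt. apply rcl_base. exists (principal t). split; [exists t; auto | reflexivity].
  Qed.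

  Variable L : Frame.
  Variable eta : G -> L.
  Hypothesis eta_pres : meet_pres eta.
  Hypothesis eta_sat : satisfies R eta.

  Definition ideal_value (D : G -> Prop) : L := fjoin (img eta D).

  Lemma ideal_value_rclosure (E : G -> Prop) :
    forall g, rclosure R E g -> fle (eta g) (ideal_value E).
  Proof.
    destruct eta_pres as [eta_mono _].
    intros g Hg. induction Hg as [g Eg | g h Hgh _ IH | S T s HST _ IH Ss].
    - apply fjoin_ub. exists g; auto.
    - eapply fle_trans; [apply eta_mono, Hgh | exact IH].
    - apply fle_trans with (fjoin (img eta S)).
      { apply fjoin_ub. exists s; split; [exact Ss | reflexivity]. }
      eapply fle_trans; [apply eta_sat, HST |].
      apply (fjoin_lub L). intros x [t [Tt ->]]. exact (IH t Tt).
  Qed.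

  Lemma ideal_value_mono (D E : G -> Prop) :
    ideal_le D E -> fle (ideal_value D) (ideal_value E).
  Proof.
    intro HDE. apply (fjoin_lub L). intros x [g [Dg ->]].
    exact (ideal_value_rclosure E g (HDE g Dg)).
  Qed.

  Lemma ideal_value_hom : @frame_hom IdealFrame L ideal_value.
  Proof.
    destruct eta_pres as (_ & eta_top & eta_meet).
    split; [| split; [| split]].
    - exact ideal_value_mono.
    - split; [apply ftop_max |]. eapply fle_trans; [apply eta_top |].
      apply fjoin_ub. exists stop; split; [exact I | reflexivity].
    - intros D E. split.
      + apply (fmeet_glb L). split; apply ideal_value_mono.
        * intros g [HD _]; exact HD.
        * intros g [_ HE]; exact HE.
      + eapply fle_trans; [apply fmeet_fjoin_distr |]. apply (fjoin_lub L).
        intros x (y & z & [d [Dd ->]] & [e [Ee ->]] & ->).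
        eapply fle_trans; [apply (proj2 (eta_meet d e)) |].
        apply fjoin_ub. exists (smeet d e). split; [split | reflexivity].
        * exact (rcl_down _ d (smeet_lb_l G d e) (rcl_base d Dd)).
        * exact (rcl_down _ e (smeet_lb_r G d e) (rcl_base e Ee)).
    - intro Ds. split.
      + apply (fjoin_lub L). intros x [g [[D [DsD Dg]] ->]].
        eapply fle_trans; [| apply fjoin_ub; exists D; split; [exact DsD | reflexivity]].
        apply fjoin_ub. exists g; auto.
      + apply (fjoin_lub L). intros x [D [DsD ->]]. apply ideal_value_mono.
        intros g Dg. apply rcl_base. exists D; auto.
  Qed.
End IdealFrame.

(* For a presentation, the comparison map h into the ideal frame is a
   section of ideal_value: every a is below the join of the generators in h a. *)
Lemma presentation_section (G : MeetSemilattice) (R : Relations G) (HR : meet_closed R)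
    (L : Frame) (eta : G -> L) :
  is_presentation G R L eta ->
  exists h : L -> IdealFrame G R HR,
    frame_hom h /\ forall a, fle a (ideal_value G L eta (h a)).
Proof.
  intros [eta_pres [eta_sat univ]].
  destruct (univ _ _ (principal_meet_pres G R HR) (principal_satisfies G R HR))
    as [[h [h_hom h_gen]] _].
  destruct (univ L eta eta_pres eta_sat) as [_ unique].
  pose proof (ideal_value_hom G R HR L eta eta_pres eta_sat) as k_hom.
  exists h. split; [exact h_hom |]. intro a.
  refine (proj2 (unique (fun a => ideal_value G L eta (h a)) (fun a => a)
                   (hom_comp _ _ _ _ _ h_hom k_hom) (hom_id L) _ _ a)).
  - intro g. eapply feq_trans; [apply (hom_feq _ _ _ k_hom), h_gen |].
    split.
    + apply (fjoin_lub L). intros x [y [-> ->]]. apply fle_refl.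
    + apply fjoin_ub. exists g; split; reflexivity.
  - intro g; split; apply fle_refl.
Qed.

Lemma overt_of_positivity (G : MeetSemilattice) (R : Relations G)
    (L : Frame) (eta : G -> L) (P : G -> Prop) :
  meet_closed R -> is_presentation G R L eta ->
  (forall g h : G, sle g h -> P g -> P h) ->
  (forall S T, R S T -> (exists s, S s /\ P s) -> (exists t, T t /\ P t)) ->
  (forall g : G, fle (eta g) (fjoin (fun x : L => P g /\ x = ftop))) ->
  overt L.
Proof.
  intros HR Hpres P_up P_rel P_cover.
  destruct (presentation_section G R HR L eta Hpres) as [h [h_hom h_section]].
  destruct h_hom as (h_mono & _ & _ & h_join).
  exists (fun a => exists g, h a g /\ P g). intros a p. split.
  - intro Hex. eapply fle_trans; [apply h_section |].
    apply (fjoin_lub L). intros x [g [Hg ->]].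
    eapply fle_trans; [apply P_cover |].
    apply bang_star_mono. intro Pg. apply Hex. exists g; auto.
  - intros Hle [g [Hg Pg]].
    (* g lies in the closure of the union of the ideals h x, x in {1 | p}. *)
    pose proof (rclosure_sub G R _ _ (proj1 (h_join (fun x : L => p /\ x = ftop)))
                  g (h_mono _ _ Hle g Hg)) as Hcl.
    destruct (rclosure_positive G R P P_up P_rel _ g Hcl Pg)
      as (x & [D [[y [[Hp _] _]] _]] & _).
    exact Hp.
Qed.

Theorem mainTheorem13 (G : MeetSemilattice) (R : Relations G)
    (L : Frame) (eta : G -> L) :
  meet_closed R ->
  is_presentation G R L eta ->
  (overt L <->
   exists P : G -> Prop,
     (forall g h : G, sle g h -> P g -> P h) /\
     (forall S T, R S T ->
        (exists s, S s /\ P s) -> (exists t, T t /\ P t)) /\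
     (forall g : G, fle (eta g) (fjoin (fun x : L => P g /\ x = ftop)))).
Proof.
  intros HR Hpres. split.
  - destruct Hpres as [eta_pres [eta_sat _]].
    exact (positivity_of_overt G R L eta eta_pres eta_sat).
  - intros (P & P_up & P_rel & P_cover).
    exact (overt_of_positivity G R L eta P HR Hpres P_up P_rel P_cover).
Qed.
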